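(* Every satisfiable set $\Phi\subseteq\mathrm{FO}\cup\sim\mathrm{FO}$ is satisfied (in first-order team semantics) by a team of cardinality $|\Phi\cap\sim\mathrm{FO}|$. In particular the team can always be chosen countable.
   Context: First-order team semantics: $(\mathcal{A},T)\models\alpha$ for $\alpha\in\mathrm{FO}$ iff $(\mathcal{A},s)\models\alpha$ for all $s\in T$; $(\mathcal{A},T)\models\sim\varphi$ iff $(\mathcal{A},T)\not\models\varphi$; $\sim\mathrm{FO}=\{\sim\alpha\mid\alpha\in\mathrm{FO}\}$ is a fragment of the Boolean closure $\mathcal{B}(\mathrm{FO})$ (closure under $\sim$ and material implication). This generalizes the empty team property (every $\Phi\subseteq\mathrm{FO}$ is satisfied by the empty team). *)

From Stdlib Require Import Vectors.Fin.

Set Implicit Arguments.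

Record signature := Signature {
  funsym : Type;
  relsym : Type;
  fun_arity : funsym -> nat;
  rel_arity : relsym -> nat
}.

Section FO.
Variable S : signature.

Inductive term : Type :=
  | Var : nat -> term
  | App : forall f : funsym S, (Fin.t (fun_arity S f) -> term) -> term.

Inductive fo : Type :=
  | FEq  : term -> term -> fo
  | FRel : forall r : relsym S, (Fin.t (rel_arity S r) -> term) -> fo
  | FBot : fo
  | FNot : fo -> fo
  | FAnd : fo -> fo -> fo
  | FOr  : fo -> fo -> fo
  | FEx  : nat -> fo -> fo
  | FAll : nat -> fo -> fo.

Record structure := Structure {
  dom : Type;
  dom_inhabited : inhabited dom;
  fun_interp : forall f : funsym S, (Fin.t (fun_arity S f) -> dom) -> dom;
  rel_interp : forall r : relsym S, (Fin.t (rel_arity S r) -> dom) -> Prop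
}.

Definition assignment (A : structure) := nat -> dom A.

Definition update (A : structure) (s : assignment A) (x : nat) (a : dom A)
  : assignment A := fun y => if PeanoNat.Nat.eqb y x then a else s y.

Fixpoint eval_term (A : structure) (s : assignment A) (t : term) : dom A :=
  match t with
  | Var x => s x
  | App f args => fun_interp A f (fun i => eval_term s (args i))
  end.

Fixpoint sat (A : structure) (s : assignment A) (a : fo) : Prop :=
  match a with
  | FEq t1 t2 => eval_term s t1 = eval_term s t2
  | FRel r args => rel_interp A r (fun i => eval_term s (args i))
  | FBot => False
  | FNot b => ~ sat s b
  | FAnd b c => sat s b /\ sat s c
  | FOr b c => sat s b \/ sat s c
  | FEx x b => exists d : dom A, sat (update s x d) b
  | FAll x b => forall d : dom A, sat (update s x d) b
  end.

Definition team (A : structure) := assignment A -> Prop.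

(* Formulas of the Boolean closure B(FO): closure of FO under the
   contradictory negation ~ and material implication. *)
Inductive bform : Type :=
  | BFO  : fo -> bform
  | BSim : bform -> bform
  | BImp : bform -> bform -> bform.

Fixpoint team_sat (A : structure) (T : team A) (p : bform) : Prop :=
  match p with
  | BFO a => forall s, T s -> sat s a
  | BSim q => ~ team_sat T q
  | BImp q r => team_sat T q -> team_sat T r
  end.

Definition in_FO_simFO (Phi : bform -> Prop) : Prop :=
  forall p, Phi p -> (exists a, p = BFO a) \/ (exists a, p = BSim (BFO a)).

Definition team_sat_set (A : structure) (T : team A) (Phi : bform -> Prop) :=
  forall p, Phi p -> team_sat T p.

Definition satisfiable (Phi : bform -> Prop) : Prop :=
  exists (A : structure) (T : team A), team_sat_set T Phi.

End FO.

(* A first-order formula holds in a team iff it holds in every member, so it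
   survives passing to a subteam; a negated formula ~a holds iff some member
   falsifies a. Hence from any team satisfying Phi we may keep just one
   falsifying assignment for each ~a in Phi: the resulting subteam still
   satisfies Phi and its members are indexed injectively by those formulas. *)
From Stdlib Require Import Classical ClassicalEpsilon ProofIrrelevance.

Lemma image_injects_into_domain {X Y : Type} (P : X -> Prop) (g : X -> Y) :
  exists h : {y : Y | exists x, P x /\ y = g x} -> X,
    (forall y, P (h y)) /\ (forall y z, h y = h z -> y = z).
Proof.
  destruct (choice (fun (y : {y : Y | exists x, P x /\ y = g x}) x =>
                      P x /\ proj1_sig y = g x)) as [h Hh].
  { intros [y Hy]. exact Hy. }
  exists h. split.
  - intro y. exact (proj1 (Hh y)).
  - intros [y Hy] [z Hz] Heq.
    destruct (Hh (exist _ y Hy)) as [_ Ey], (Hh (exist _ z Hz)) as [_ Ez].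
    simpl in Ey, Ez.
    assert (y = z) as <- by (rewrite Ey, Ez, Heq; reflexivity).
    f_equal. apply proof_irrelevance.
Qed.

Section TeamSemantics.
Context {S : signature} {A : structure S}.

Lemma team_sat_FO_downward {T T' : team A} {a : fo S} :
  (forall s, T' s -> T s) -> team_sat T (BFO a) -> team_sat T' (BFO a).
Proof.
  intros Hsub HT s Hs. exact (HT s (Hsub s Hs)).
Qed.

Lemma team_sat_sim_FO (T : team A) (a : fo S) :
  team_sat T (BSim (BFO a)) <-> exists s, T s /\ ~ sat s a.
Proof.
  simpl. split.
  - intro Hnot. apply NNPP. intro Hnone. apply Hnot. intros s Hs.
    apply NNPP. intro Hfalse. apply Hnone. exists s. split; assumption.
  - intros [s [Hs Hfalse]] Hall. exact (Hfalse (Hall s Hs)).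
Qed.

Lemma team_sat_set_subteam {Phi : bform S -> Prop} {T : team A} (T' : team A) :
  in_FO_simFO Phi ->
  team_sat_set T Phi ->
  (forall s, T' s -> T s) ->
  (forall a, Phi (BSim (BFO a)) -> exists s, T' s /\ ~ sat s a) ->
  team_sat_set T' Phi.
Proof.
  intros HPhi HT Hsub Hwit p Hp.
  destruct (HPhi p Hp) as [[a ->] | [a ->]].
  - exact (team_sat_FO_downward Hsub (HT _ Hp)).
  - apply team_sat_sim_FO. exact (Hwit a Hp).
Qed.

Lemma counterexample_choice {Phi : bform S -> Prop} {T : team A} :
  team_sat_set T Phi ->
  exists w : fo S -> assignment A,
    forall a, Phi (BSim (BFO a)) -> T (w a) /\ ~ sat (w a) a.
Proof.
  intro HT.
  apply (choice (fun a s => Phi (BSim (BFO a)) -> T s /\ ~ sat s a)). intro a.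
  destruct (classic (Phi (BSim (BFO a)))) as [Ha | Ha].
  - destruct (proj1 (team_sat_sim_FO T a) (HT _ Ha)) as [s Hs].
    exists s. intros _. exact Hs.
  - destruct (dom_inhabited A) as [d].
    exists (fun _ => d). intro Ha'. contradiction.
Qed.

End TeamSemantics.

Theorem mainTheorem6 (S : signature) (Phi : bform S -> Prop) :
  in_FO_simFO Phi ->
  satisfiable Phi ->
  exists (A : structure S) (T : team A),
    team_sat_set T Phi /\
    (* |T| <= |Phi ∩ ~FO| : an injection from T into Phi ∩ ~FO *)
    exists f : {s : assignment A | T s} -> fo S,
      (forall x, Phi (BSim (BFO (f x)))) /\
      (forall x y, f x = f y -> x = y).
Proof.
  intros HPhi [A [T HT]].
  destruct (counterexample_choice HT) as [w Hw].
  exists A, (fun s => exists a, Phi (BSim (BFO a)) /\ s = w a). split.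
  - apply (team_sat_set_subteam _ HPhi HT).
    + intros s [a [Ha ->]]. exact (proj1 (Hw a Ha)).
    + intros a Ha. exists (w a). split.
      * exists a. split; [exact Ha | reflexivity].
      * exact (proj2 (Hw a Ha)).
  - exact (image_injects_into_domain (fun a => Phi (BSim (BFO a))) w).
Qed.
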